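(* Let $\mathbb{X}$ be a Cartesian $k$-differential abstract Kleisli category with differential combinator $\mathsf{D}$ and abstract Kleisli structure $(\mathsf{S},\epsilon,\vartheta)$. Then the monad $\mathbb{S}=(\mathsf{S},\delta,\vartheta)$ on $\vartheta\text{-}\mathsf{nat}[\mathbb{X}]$, where $\delta_A=\mathsf{S}(\epsilon_A)$, is a Cartesian $k$-differential monad on the Cartesian $k$-differential category $\vartheta\text{-}\mathsf{nat}[\mathbb{X}]$ (with structure inherited from $\mathbb{X}$). Furthermore, the isomorphism of categories $\mathsf{G}_\vartheta:\mathbb{X}\to\mathsf{KL}(\mathbb{S})$, identity on objects and given on $f:A\to B$ by $\llbracket\mathsf{G}_\vartheta(f)\rrbracket=\mathsf{S}(f)\circ\vartheta_A$ (with inverse $\mathsf{G}^{-1}_\vartheta(\llbracket f\rrbracket)=\epsilon_B\circ\llbracket f\rrbracket$), is a strict Cartesian $k$-differential functor, as is its inverse, where $\mathsf{KL}(\mathbb{S})$ carries the Cartesian $k$-differential structure lifted from $\vartheta\text{-}\mathsf{nat}[\mathbb{X}]$ (products of objects as in the base, $\llbracket\pi_j\rrbracket=\vartheta_{A_j}\circ\pi_j$, $\llbracket\langle f_1,\dots,f_n\rangle\rrbracket=\omega^{-1}\circ\langle\llbracket f_1\rrbracket,\dots,\llbracket f_n\rrbracket\rangle$, $k$-module structure inherited, and $\llbracket\mathsf{D}_\mathbb{S}[f]\rrbracket=\mathsf{D}[\llbracket f\rrbracket]$). Hence $\mathbb{X}\cong\mathsf{KL}(\mathbb{S})$ as Cartesian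 $k$-differential categories.
   Context: Fix a commutative semiring $k$. A left $k$-linear category is a category $\mathbb{X}$ in which each hom-set $\mathbb{X}(A,B)$ is a $k$-module (scalar multiplication $r\cdot f$, addition $+$, zero $0$) such that precomposition is $k$-linear: $(r\cdot f+s\cdot g)\circ x=r\cdot(f\circ x)+s\cdot(g\circ x)$. A map $f$ is $k$-linear if $f\circ(r\cdot x+s\cdot y)=r\cdot(f\circ x)+s\cdot(f\circ y)$ for all suitable $x,y$ and $r,s\in k$. A Cartesian left $k$-linear category is a left $k$-linear category with finite products (terminal object $\ast$, projections $\pi_j:A_1\times\cdots\times A_n\to A_j$, pairing $\langle-,\dots,-\rangle$) in which all projections are $k$-linear. A Cartesian $k$-differential category is a Cartesian left $k$-linear category equipped with a differential combinator $\mathsf{D}$ assigning to each $f:A\to B$ a map $\mathsf{D}[f]:A\times A\to B$ such that: [CD.1] $\mathsf{D}[r\cdot f+s\cdot g]=r\cdot\mathsf{D}[f]+s\cdot\mathsf{D}[g]$; [CD.2] $\mathsf{D}[f]\circ\langle\pi_1,r\cdot\pi_2+s\cdot\pi_3\rangle=r\cdot(\mathsf{D}[f]\circ\langle\pi_1,\pi_2\rangle)+s\cdot(\mathsf{D}[f]\circ\langle\pi_1,\pi_3\rangle)$ (as maps $A\times A\times A\to B$); [CD.3] $\mathsf{D}[1_A]=\pi_2$ and, for $\pi_j:A_1\times\cdots\times A_n\to A_j$, $\mathsf{D}[\pi_j]=\pi_{n+j}$; [CD.4] $\mathsf{D}[\langle f_1,\dots,f_n\rangle]=\langle\mathsf{D}[f_1],\dots,\mathsf{D}[f_n]\rangle$;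 [CD.5] $\mathsf{D}[g\circ f]=\mathsf{D}[g]\circ\langle f\circ\pi_1,\mathsf{D}[f]\rangle$; [CD.6] $\mathsf{D}[\mathsf{D}[f]]\circ\langle\pi_1,0,0,\pi_2\rangle=\mathsf{D}[f]$; [CD.7] $\mathsf{D}[\mathsf{D}[f]]\circ\langle\pi_1,\pi_2,\pi_3,\pi_4\rangle=\mathsf{D}[\mathsf{D}[f]]\circ\langle\pi_1,\pi_3,\pi_2,\pi_4\rangle$ (identifying $(A\times A)\times(A\times A)$ with $A\times A\times A\times A$). A map $f$ is $\mathsf{D}$-linear if $\mathsf{D}[f]=f\circ\pi_2$. For Cartesian left $k$-linear categories $\mathbb{X},\mathbb{Y}$, a strong Cartesian $k$-linear functor is a functor $\mathsf{F}:\mathbb{X}\to\mathbb{Y}$ such that $\mathsf{F}(\ast)\to\ast$ is an isomorphism, the canonical maps $\omega_{A_1,\dots,A_n}=\langle\mathsf{F}(\pi_1),\dots,\mathsf{F}(\pi_n)\rangle:\mathsf{F}(A_1\times\cdots\times A_n)\to\mathsf{F}(A_1)\times\cdots\times\mathsf{F}(A_n)$ are isomorphisms, and $\mathsf{F}(r\cdot f+s\cdot g)=r\cdot\mathsf{F}(f)+s\cdot\mathsf{F}(g)$. It is strict if moreover $\omega$ is the identity. For Cartesian $k$-differential categories, a strong Cartesian $k$-differential functor is a strong Cartesian $k$-linear functor with $\mathsf{D}[\mathsf{F}(f)]=\mathsf{F}(\mathsf{D}[f])\circ\omega^{-1}_{A,A}$ for all $f:A\to B$; a strict Cartesian $k$-differential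 functor is a strict Cartesian $k$-linear functor with $\mathsf{D}[\mathsf{F}(f)]=\mathsf{F}(\mathsf{D}[f])$. A Cartesian $k$-differential monad on a Cartesian $k$-differential category $\mathbb{X}$ is a monad $\mathbb{S}=(\mathsf{S},\mu,\eta)$ on $\mathbb{X}$ such that $\mathsf{S}$ is a strong Cartesian $k$-differential functor and every $\eta_A$ and $\mu_A$ is $\mathsf{D}$-linear. Kleisli category notation: $\mathsf{KL}(\mathbb{S})$ has the objects of the base and a map $f:A\to B$ is a base map $\llbracket f\rrbracket:A\to\mathsf{S}(B)$; identities $\llbracket 1_A\rrbracket=\eta_A$, composition $\llbracket g\circ f\rrbracket=\mu_C\circ\mathsf{S}(\llbracket g\rrbracket)\circ\llbracket f\rrbracket$. An abstract Kleisli structure on a category $\mathbb{X}$ is a triple $(\mathsf{S},\epsilon,\vartheta)$ of an endofunctor $\mathsf{S}$, a natural transformation $\epsilon_A:\mathsf{S}(A)\to A$, and a family of maps $\vartheta_A:A\to\mathsf{S}(A)$ (not necessarily natural) such that $\vartheta_{\mathsf{S}(A)}$ is natural in $A$ and $\epsilon_A\circ\vartheta_A=1_A$, $\epsilon_{\mathsf{S}(A)}\circ\mathsf{S}(\vartheta_A)=1_{\mathsf{S}(A)}$, $\vartheta_{\mathsf{S}(A)}\circ\vartheta_A=\mathsf{S}(\vartheta_A)\circ\vartheta_A$. A map $f:A\to B$ is $\vartheta$-natural if $\vartheta_B\circ f=\mathsf{S}(f)\circ\vartheta_A$; $\vartheta\text{-}\mathsf{nat}[\mathbb{X}]$ denotes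 the subcategory of $\vartheta$-natural maps. It is known (Führmann) that $\mathsf{S}$ restricts to an endofunctor of $\vartheta\text{-}\mathsf{nat}[\mathbb{X}]$, that $(\mathsf{S},\delta,\vartheta)$ with $\delta_A=\mathsf{S}(\epsilon_A)$ is a monad on $\vartheta\text{-}\mathsf{nat}[\mathbb{X}]$, and that $\mathsf{G}_\vartheta$ as in the claim is an isomorphism of categories. A Cartesian $k$-differential abstract Kleisli category is a Cartesian $k$-differential category $\mathbb{X}$ with an abstract Kleisli structure $(\mathsf{S},\epsilon,\vartheta)$ such that all projections are $\vartheta$-natural, $\mathsf{S}$ is a strong Cartesian $k$-differential functor, and every $\epsilon_A$ and $\vartheta_A$ is $\mathsf{D}$-linear. In this situation $\vartheta\text{-}\mathsf{nat}[\mathbb{X}]$ is a sub-Cartesian $k$-differential category of $\mathbb{X}$. *)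

(* Axioms are stated as Prop predicates
   relative to a predicate [P] on maps which picks out a (wide) subcategory;
   the whole category is [allMaps X].  This lets us speak of the subcategory
   theta-nat[X] and of the Kleisli category (whose maps are theta-natural maps
   A -> S B) without building subtypes. *)
From HB Require Import structures.
From mathcomp Require Import all_boot all_algebra.
Set Implicit Arguments. Unset Strict Implicit. Unset Printing Implicit Defensive.
Import GRing.Theory.
Local Open Scope ring_scope.

Record CartObs := { ob :> Type; cterm : ob; cprod : ob -> ob -> ob }.
Arguments cterm {c}.
Arguments cprod {c}.

Record RawCDC (k : pzSemiRingType) (O : CartObs) := {
  Mor : O -> O -> lSemiModType k;
  idc : forall A, Mor A A;
  cmp : forall A B C, Mor B C -> Mor A B -> Mor A C;
  pj1 : forall A B, Mor (cprod A B) A;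
  pj2 : forall A B, Mor (cprod A B) B;
  pairing : forall C A B, Mor C A -> Mor C B -> Mor C (cprod A B);
  bang : forall A, Mor A cterm;
  D : forall A B, Mor A B -> Mor (cprod A A) B
}.
Arguments Mor {k O} r A B.
Arguments idc {k O} r A.
Arguments cmp {k O} r {A B C}.
Arguments pj1 {k O} r A B.
Arguments pj2 {k O} r A B.
Arguments pairing {k O} r {C A B}.
Arguments bang {k O} r A.
Arguments D {k O} r {A B}.

Section Defs.
Variables (k : pzSemiRingType) (O : CartObs).

Definition homP (X : RawCDC k O) := forall A B, Mor X A B -> Prop.
Definition allMaps (X : RawCDC k O) : homP X := fun _ _ _ => True.
Arguments allMaps X : clear implicits.

Definition is_inverse (X : RawCDC k O) A B (f : Mor X A B) (g : Mor X B A) :=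
  cmp X g f = idc X A /\ cmp X f g = idc X B.

Definition D_linear (X : RawCDC k O) A B (f : Mor X A B) :=
  D X f = cmp X f (pj2 X A A).

Record is_CDC_on (X : RawCDC k O) (P : homP X) : Prop := {
  cl_id : forall A, P _ _ (idc X A);
  cl_comp : forall A B C (g : Mor X B C) (f : Mor X A B),
      P _ _ f -> P _ _ g -> P _ _ (cmp X g f);
  cl_p1 : forall A B, P _ _ (pj1 X A B);
  cl_p2 : forall A B, P _ _ (pj2 X A B);
  cl_pair : forall C A B (f : Mor X C A) (g : Mor X C B),
      P _ _ f -> P _ _ g -> P _ _ (pairing X f g);
  cl_bang : forall A, P _ _ (bang X A);
  cl_zero : forall A B, P _ _ (0 : Mor X A B);
  cl_lin : forall A B (r s : k) (f g : Mor X A B),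
      P _ _ f -> P _ _ g -> P _ _ (r *: f + s *: g);
  cl_D : forall A B (f : Mor X A B), P _ _ f -> P _ _ (D X f);
  cat_assoc : forall A B C E (f : Mor X A B) (g : Mor X B C) (h : Mor X C E),
      P _ _ f -> P _ _ g -> P _ _ h ->
      cmp X h (cmp X g f) = cmp X (cmp X h g) f;
  cat_idl : forall A B (f : Mor X A B), P _ _ f -> cmp X (idc X B) f = f;
  cat_idr : forall A B (f : Mor X A B), P _ _ f -> cmp X f (idc X A) = f;
  term_uniq : forall A (f : Mor X A cterm), P _ _ f -> f = bang X A;
  prod_beta1 : forall C A B (f : Mor X C A) (g : Mor X C B),
      P _ _ f -> P _ _ g -> cmp X (pj1 X A B) (pairing X f g) = f;
  prod_beta2 : forall C A B (f : Mor X C A) (g : Mor X C B),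
      P _ _ f -> P _ _ g -> cmp X (pj2 X A B) (pairing X f g) = g;
  prod_eta : forall C A B (h : Mor X C (cprod A B)), P _ _ h ->
      pairing X (cmp X (pj1 X A B) h) (cmp X (pj2 X A B) h) = h;
  left_lin : forall A B C (f g : Mor X B C) (x : Mor X A B) (r s : k),
      P _ _ f -> P _ _ g -> P _ _ x ->
      cmp X (r *: f + s *: g) x = r *: cmp X f x + s *: cmp X g x;
  p1_lin : forall C A B (x y : Mor X C (cprod A B)) (r s : k),
      P _ _ x -> P _ _ y ->
      cmp X (pj1 X A B) (r *: x + s *: y)
      = r *: cmp X (pj1 X A B) x + s *: cmp X (pj1 X A B) y;
  p2_lin : forall C A B (x y : Mor X C (cprod A B)) (r s : k),
      P _ _ x -> P _ _ y ->
      cmp X (pj2 X A B) (r *: x + s *: y)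
      = r *: cmp X (pj2 X A B) x + s *: cmp X (pj2 X A B) y;
  CD1 : forall A B (f g : Mor X A B) (r s : k), P _ _ f -> P _ _ g ->
      D X (r *: f + s *: g) = r *: D X f + s *: D X g;
  CD2 : forall A B (f : Mor X A B) (r s : k), P _ _ f ->
      let q1 := pj1 X A (cprod A A) in
      let q2 := cmp X (pj1 X A A) (pj2 X A (cprod A A)) in
      let q3 := cmp X (pj2 X A A) (pj2 X A (cprod A A)) in
      cmp X (D X f) (pairing X q1 (r *: q2 + s *: q3))
      = r *: cmp X (D X f) (pairing X q1 q2) + s *: cmp X (D X f) (pairing X q1 q3);
  CD3_id : forall A, D X (idc X A) = pj2 X A A;
  CD3_p1 : forall A B, D X (pj1 X A B) = cmp X (pj1 X A B) (pj2 X (cprod A B) (cprod A B));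
  CD3_p2 : forall A B, D X (pj2 X A B) = cmp X (pj2 X A B) (pj2 X (cprod A B) (cprod A B));
  CD4 : forall C A B (f : Mor X C A) (g : Mor X C B), P _ _ f -> P _ _ g ->
      D X (pairing X f g) = pairing X (D X f) (D X g);
  CD5 : forall A B C (f : Mor X A B) (g : Mor X B C), P _ _ f -> P _ _ g ->
      D X (cmp X g f) = cmp X (D X g) (pairing X (cmp X f (pj1 X A A)) (D X f));
  CD6 : forall A B (f : Mor X A B), P _ _ f ->
      cmp X (D X (D X f))
        (pairing X (pairing X (pj1 X A A) 0) (pairing X 0 (pj2 X A A))) = D X f;
  CD7 : forall A B (f : Mor X A B), P _ _ f ->
      let pi1 := cmp X (pj1 X A A) (pj1 X (cprod A A) (cprod A A)) in
      let pi2 := cmp X (pj2 X A A) (pj1 X (cprod A A) (cprod A A)) in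
      let pi3 := cmp X (pj1 X A A) (pj2 X (cprod A A) (cprod A A)) in
      let pi4 := cmp X (pj2 X A A) (pj2 X (cprod A A) (cprod A A)) in
      cmp X (D X (D X f)) (pairing X (pairing X pi1 pi2) (pairing X pi3 pi4))
      = cmp X (D X (D X f)) (pairing X (pairing X pi1 pi3) (pairing X pi2 pi4))
}.

Section Endo.
Variables (X : RawCDC k O) (Sob : O -> O)
          (Smap : forall A B, Mor X A B -> Mor X (Sob A) (Sob B)).
Arguments Smap {A B}.

Definition omega A B : Mor X (Sob (cprod A B)) (cprod (Sob A) (Sob B)) :=
  pairing X (Smap (pj1 X A B)) (Smap (pj2 X A B)).

Record is_strong_CD_endo (P : homP X) : Prop := {
  se_pres : forall A B (f : Mor X A B), P _ _ f -> P _ _ (Smap f);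
  se_id : forall A, Smap (idc X A) = idc X (Sob A);
  se_comp : forall A B C (f : Mor X A B) (g : Mor X B C), P _ _ f -> P _ _ g ->
      Smap (cmp X g f) = cmp X (Smap g) (Smap f);
  se_term_iso : exists u : Mor X cterm (Sob cterm),
      P _ _ u /\ is_inverse (bang X (Sob cterm)) u;
  se_omega_iso : forall A B, exists w : Mor X (cprod (Sob A) (Sob B)) (Sob (cprod A B)),
      P _ _ w /\ is_inverse (omega A B) w;
  se_lin : forall A B (f g : Mor X A B) (r s : k), P _ _ f -> P _ _ g ->
      Smap (r *: f + s *: g) = r *: Smap f + s *: Smap g;
  se_D : forall A B (f : Mor X A B), P _ _ f ->
      forall w : Mor X (cprod (Sob A) (Sob A)) (Sob (cprod A A)),
      P _ _ w -> is_inverse (omega A A) w ->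
      D X (Smap f) = cmp X (Smap (D X f)) w
}.

Record is_monad_on (P : homP X) (mu : forall A, Mor X (Sob (Sob A)) (Sob A))
    (eta : forall A, Mor X A (Sob A)) : Prop := {
  mo_pres : forall A B (f : Mor X A B), P _ _ f -> P _ _ (Smap f);
  mo_id : forall A, Smap (idc X A) = idc X (Sob A);
  mo_comp : forall A B C (f : Mor X A B) (g : Mor X B C), P _ _ f -> P _ _ g ->
      Smap (cmp X g f) = cmp X (Smap g) (Smap f);
  mo_muP : forall A, P _ _ (mu A);
  mo_etaP : forall A, P _ _ (eta A);
  mo_mu_nat : forall A B (f : Mor X A B), P _ _ f ->
      cmp X (mu B) (Smap (Smap f)) = cmp X (Smap f) (mu A);
  mo_eta_nat : forall A B (f : Mor X A B), P _ _ f ->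
      cmp X (eta B) f = cmp X (Smap f) (eta A);
  mo_assoc : forall A, cmp X (mu A) (Smap (mu A)) = cmp X (mu A) (mu (Sob A));
  mo_unitl : forall A, cmp X (mu A) (eta (Sob A)) = idc X (Sob A);
  mo_unitr : forall A, cmp X (mu A) (Smap (eta A)) = idc X (Sob A)
}.

Definition is_CD_monad_on (P : homP X) mu eta :=
  is_monad_on P mu eta /\ is_strong_CD_endo P /\
  (forall A, D_linear (mu A)) /\ (forall A, D_linear (eta A)).

Record is_abstract_kleisli (eps : forall A, Mor X (Sob A) A)
    (theta : forall A, Mor X A (Sob A)) : Prop := {
  ak_id : forall A, Smap (idc X A) = idc X (Sob A);
  ak_comp : forall A B C (f : Mor X A B) (g : Mor X B C),
      Smap (cmp X g f) = cmp X (Smap g) (Smap f);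
  ak_eps_nat : forall A B (f : Mor X A B),
      cmp X (eps B) (Smap f) = cmp X f (eps A);
  ak_thetaS_nat : forall A B (f : Mor X A B),
      cmp X (theta (Sob B)) (Smap f) = cmp X (Smap (Smap f)) (theta (Sob A));
  ak_eq1 : forall A, cmp X (eps A) (theta A) = idc X A;
  ak_eq2 : forall A, cmp X (eps (Sob A)) (Smap (theta A)) = idc X (Sob A);
  ak_eq3 : forall A, cmp X (theta (Sob A)) (theta A)
                    = cmp X (Smap (theta A)) (theta A)
}.

Definition thetanat (theta : forall A, Mor X A (Sob A)) : homP X :=
  fun A B f => cmp X (theta B) f = cmp X (Smap f) (theta A).

Record is_CD_abstract_kleisli (eps : forall A, Mor X (Sob A) A)
    (theta : forall A, Mor X A (Sob A)) : Prop := {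
  cak_CDC : is_CDC_on (allMaps X);
  cak_AK : is_abstract_kleisli eps theta;
  cak_p1 : forall A B, thetanat theta (pj1 X A B);
  cak_p2 : forall A B, thetanat theta (pj2 X A B);
  cak_strong : is_strong_CD_endo (allMaps X);
  cak_eps : forall A, D_linear (eps A);
  cak_theta : forall A, D_linear (theta A)
}.

(* The Kleisli category of (Sob, Smap, mu, eta), with the lifted Cartesian
   k-differential structure; [winv] is omega^{-1} and [u] is the inverse of
   S(cterm) -> cterm. *)
Definition KL (mu : forall A, Mor X (Sob (Sob A)) (Sob A))
    (eta : forall A, Mor X A (Sob A))
    (winv : forall A B, Mor X (cprod (Sob A) (Sob B)) (Sob (cprod A B)))
    (u : Mor X cterm (Sob cterm)) : RawCDC k O := {|
  Mor := fun A B => Mor X A (Sob B);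
  idc := eta;
  cmp := fun A B C g f => cmp X (mu C) (cmp X (Smap g) f);
  pj1 := fun A B => cmp X (eta A) (pj1 X A B);
  pj2 := fun A B => cmp X (eta B) (pj2 X A B);
  pairing := fun C A B f g => cmp X (winv A B) (pairing X f g);
  bang := fun A => cmp X u (bang X A);
  D := fun A B f => D X f
|}.

End Endo.

Record is_strict_CD_functor (X Y : RawCDC k O) (P : homP X) (Q : homP Y)
    (F : forall A B, Mor X A B -> Mor Y A B) : Prop := {
  sf_pres : forall A B (f : Mor X A B), P _ _ f -> Q _ _ (F _ _ f);
  sf_id : forall A, F _ _ (idc X A) = idc Y A;
  sf_comp : forall A B C (f : Mor X A B) (g : Mor X B C), P _ _ f -> P _ _ g ->
      F _ _ (cmp X g f) = cmp Y (F _ _ g) (F _ _ f);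
  (* F(cterm) -> cterm is the identity *)
  sf_term : bang Y cterm = idc Y cterm;
  (* omega_{A,B} = <F(pj1), F(pj2)> is the identity *)
  sf_omega : forall A B,
      pairing Y (F _ _ (pj1 X A B)) (F _ _ (pj2 X A B)) = idc Y (cprod A B);
  sf_lin : forall A B (f g : Mor X A B) (r s : k), P _ _ f -> P _ _ g ->
      F _ _ (r *: f + s *: g) = r *: F _ _ f + s *: F _ _ g;
  sf_D : forall A B (f : Mor X A B), P _ _ f -> D Y (F _ _ f) = F _ _ (D X f)
}.

End Defs.

Arguments allMaps {k O} X A B _.
Arguments thetanat {k O X Sob} Smap theta A B _.

From HB Require Import structures.
From mathcomp Require Import all_boot all_algebra.
Import GRing.Theory.
Local Open Scope ring_scope.

Set Implicit Arguments. Unset Strict Implicit. Unset Printing Implicit Defensive.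

Section CartesianDifferentialFacts.
Variables (k : pzSemiRingType) (O : CartObs) (X : RawCDC k O).
Hypothesis CX : is_CDC_on (allMaps X).

Lemma cmpA A B C E (f : Mor X A B) (g : Mor X B C) (h : Mor X C E) :
  cmp X h (cmp X g f) = cmp X (cmp X h g) f.
Proof. exact: (cat_assoc CX I I I). Qed.

Lemma cmp1l A B (f : Mor X A B) : cmp X (idc X B) f = f.
Proof. exact: (cat_idl CX I). Qed.

Lemma cmp1r A B (f : Mor X A B) : cmp X f (idc X A) = f.
Proof. exact: (cat_idr CX I). Qed.

Lemma pj1_pair C A B (f : Mor X C A) (g : Mor X C B) :
  cmp X (pj1 X A B) (pairing X f g) = f.
Proof. exact: (prod_beta1 CX I I). Qed.

Lemma pj2_pair C A B (f : Mor X C A) (g : Mor X C B) :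
  cmp X (pj2 X A B) (pairing X f g) = g.
Proof. exact: (prod_beta2 CX I I). Qed.

Lemma pair_eta C A B (h : Mor X C (cprod A B)) :
  pairing X (cmp X (pj1 X A B) h) (cmp X (pj2 X A B) h) = h.
Proof. exact: (prod_eta CX I). Qed.

Lemma cmp_linl A B C (f g : Mor X B C) (x : Mor X A B) (r s : k) :
  cmp X (r *: f + s *: g) x = r *: cmp X f x + s *: cmp X g x.
Proof. exact: (left_lin CX _ _ I I I). Qed.

Lemma cmp0l A B C (x : Mor X A B) : cmp X (0 : Mor X B C) x = 0.
Proof. by have := cmp_linl (C:=C) 0 0 x 0 0; rewrite !scale0r !addr0. Qed.

Lemma pair_cmp C' C A B (f : Mor X C A) (g : Mor X C B) (h : Mor X C' C) :
  cmp X (pairing X f g) h = pairing X (cmp X f h) (cmp X g h).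
Proof. by rewrite -[LHS]pair_eta !cmpA pj1_pair pj2_pair. Qed.

(* [CD.2] evaluated at <x, <x, y>>: a D-linear map is k-linear. *)
Lemma D_linear_lin A B (l : Mor X A B) : D_linear l ->
  forall C (x y : Mor X C A) (r s : k),
  cmp X l (r *: x + s *: y) = r *: cmp X l x + s *: cmp X l y.
Proof.
move=> Dl C x y r s.
have := CD2 CX r s (I : allMaps X _ _ l); rewrite /= Dl -!cmpA !pj2_pair => E.
have := congr1 (fun z => cmp X z (pairing X x (pairing X x y))) E.
by rewrite cmp_linl -!cmpA cmp_linl -!cmpA !pj2_pair !pj1_pair.
Qed.

Lemma D_linear_cmp0 A B (l : Mor X A B) : D_linear l ->
  forall C, cmp X l (0 : Mor X C A) = 0.
Proof.
by move=> Dl C; have := D_linear_lin Dl (C:=C) 0 0 0 0; rewrite !scale0r !addr0.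
Qed.

Lemma D_linear_cmpD A B C (l : Mor X B C) (f : Mor X A B) : D_linear l ->
  D X (cmp X l f) = cmp X l (D X f).
Proof. by move=> Dl; rewrite (CD5 CX I I) Dl -cmpA pj2_pair. Qed.

End CartesianDifferentialFacts.

Section SubCategory.
Variables (k : pzSemiRingType) (O : CartObs) (X : RawCDC k O) (P : homP X).
Hypothesis CX : is_CDC_on (allMaps X).

Lemma CDC_on_sub :
  (forall A, P (idc X A)) ->
  (forall A B C (g : Mor X B C) (f : Mor X A B),
      P f -> P g -> P (cmp X g f)) ->
  (forall A B, P (pj1 X A B)) ->
  (forall A B, P (pj2 X A B)) ->
  (forall C A B (f : Mor X C A) (g : Mor X C B),
      P f -> P g -> P (pairing X f g)) ->
  (forall A, P (bang X A)) ->
  (forall A B, P (0 : Mor X A B)) ->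
  (forall A B (r s : k) (f g : Mor X A B),
      P f -> P g -> P (r *: f + s *: g)) ->
  (forall A B (f : Mor X A B), P f -> P (D X f)) ->
  is_CDC_on P.
Proof.
case: CX => _ _ _ _ _ _ _ _ _ ass idl idr term b1 b2 eta ll l1 l2
  d1 d2 d3i d3a d3b d4 d5 d6 d7 Pid Pcmp Pp1 Pp2 Ppair Pbang P0 Plin PD.
constructor=> //; intros; by [ apply: ass | apply: idl | apply: idr | apply: term
  | apply: b1 | apply: b2 | apply: eta | apply: ll | apply: l1 | apply: l2
  | apply: d1 | apply: d2 | apply: d4 | apply: d5 | apply: d6 | apply: d7 ].
Qed.

End SubCategory.

Section TransportAlongFunctor.
Variables (k : pzSemiRingType) (O : CartObs) (X Y : RawCDC k O) (P : homP Y).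
Variable F : forall A B, Mor X A B -> Mor Y A B.
Arguments F {A B}.
Hypothesis CX : is_CDC_on (allMaps X).

Hypothesis F_P : forall A B (f : Mor X A B), P (F f).
Hypothesis F_onto : forall A B (g : Mor Y A B), P g -> exists f, g = F f.
Hypothesis F_id : forall A, F (idc X A) = idc Y A.
Hypothesis F_cmp : forall A B C (f : Mor X A B) (g : Mor X B C),
  F (cmp X g f) = cmp Y (F g) (F f).
Hypothesis F_pj1 : forall A B, F (pj1 X A B) = pj1 Y A B.
Hypothesis F_pj2 : forall A B, F (pj2 X A B) = pj2 Y A B.
Hypothesis F_pair : forall C A B (f : Mor X C A) (g : Mor X C B),
  F (pairing X f g) = pairing Y (F f) (F g).
Hypothesis F_bang : forall A, F (bang X A) = bang Y A.
Hypothesis F_lin : forall A B (f g : Mor X A B) (r s : k),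
  F (r *: f + s *: g) = r *: F f + s *: F g.
Hypothesis F_D : forall A B (f : Mor X A B), F (D X f) = D Y (F f).

Lemma F_zero A B : F (0 : Mor X A B) = 0.
Proof. by have := F_lin (A:=A) (B:=B) 0 0 0 0; rewrite !scale0r !addr0. Qed.

Local Ltac write_as_images := repeat match goal with
  | H : P ?g |- _ => have [? ->] := F_onto H; clear H end.

Local Ltac fold_F :=
  rewrite -?F_id -?F_pj1 -?F_pj2 -?F_bang -?F_zero;
  rewrite -?(F_cmp, F_pair, F_lin, F_D).

Lemma CDC_on_image : is_CDC_on P.
Proof.
constructor; cbv zeta; intros; write_as_images; fold_F; rewrite ?F_P //.
- by rewrite (cmpA CX).
- by rewrite (cmp1l CX).
- by rewrite (cmp1r CX).
- by f_equal; apply: (term_uniq CX I).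
- by rewrite (pj1_pair CX).
- by rewrite (pj2_pair CX).
- by rewrite (pair_eta CX).
- by rewrite (cmp_linl CX).
- by rewrite (p1_lin CX _ _ I I).
- by rewrite (p2_lin CX _ _ I I).
- by rewrite (CD1 CX _ _ I I).
- by rewrite (CD2 CX _ _ I).
- by rewrite (CD3_id CX).
- by rewrite (CD3_p1 CX).
- by rewrite (CD3_p2 CX).
- by rewrite (CD4 CX I I).
- by rewrite (CD5 CX I I).
- by rewrite (CD6 CX I).
- by rewrite (CD7 CX I).
Qed.

Lemma strict_CD_functor_image : is_strict_CD_functor (allMaps X) P (@F).
Proof.
constructor=> //.
- by rewrite -F_bang -F_id (term_uniq CX (I : allMaps X _ _ (idc X cterm))).
- by move=> A B; rewrite -F_pair -F_id -[idc X _](pair_eta CX) !(cmp1r CX).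
Qed.

Lemma strict_CD_functor_inverse (Finv : forall A B, Mor Y A B -> Mor X A B) :
  (forall A B (f : Mor X A B), Finv _ _ (F f) = f) ->
  is_strict_CD_functor P (allMaps X) Finv.
Proof.
move=> FinvF; constructor; intros; write_as_images; fold_F; rewrite ?FinvF //.
- by rewrite (term_uniq CX (I : allMaps X _ _ (idc X cterm))).
- by rewrite -[idc X _](pair_eta CX) !(cmp1r CX).
Qed.

End TransportAlongFunctor.

Section StrongEndofunctor.
Variables (k : pzSemiRingType) (O : CartObs) (X : RawCDC k O) (Sob : O -> O)
  (Smap : forall A B, Mor X A B -> Mor X (Sob A) (Sob B)).
Hypotheses (CX : is_CDC_on (allMaps X)) (SE : is_strong_CD_endo Smap (allMaps X)).

Lemma Smap_id A : Smap (idc X A) = idc X (Sob A).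
Proof. exact: (se_id SE). Qed.

Lemma Smap_cmp A B C (f : Mor X A B) (g : Mor X B C) :
  Smap (cmp X g f) = cmp X (Smap g) (Smap f).
Proof. exact: (se_comp SE I I). Qed.

Lemma Smap0 A B : Smap (0 : Mor X A B) = 0.
Proof.
by have := se_lin SE (A:=A) (B:=B) (f:=0) (g:=0) 0 0 I I; rewrite !scale0r !addr0.
Qed.

(* S(cterm) is terminal, being isomorphic to cterm. *)
Lemma S_terminal A (x y : Mor X A (Sob cterm)) : x = y.
Proof.
have [u [_ [ub _]]] := se_term_iso SE.
rewrite -(cmp1l CX x) -(cmp1l CX y) -ub -!(cmpA CX).
by rewrite (term_uniq CX (I : allMaps X _ _ (cmp X _ x)))
           (term_uniq CX (I : allMaps X _ _ (cmp X _ y))).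
Qed.

(* S(S(cterm)) is terminal, being a retract of S(cterm). *)
Lemma SS_terminal A (x y : Mor X A (Sob (Sob cterm))) : x = y.
Proof.
have [u [_ [ub _]]] := se_term_iso SE.
have Sub : cmp X (Smap u) (Smap (bang X (Sob cterm))) = idc X _.
  by rewrite -Smap_cmp ub Smap_id.
rewrite -(cmp1l CX x) -(cmp1l CX y) -Sub -!(cmpA CX).
by congr (cmp X _ _); apply: S_terminal.
Qed.

(* omega = <S pj1, S pj2> is invertible, so S pj1 and S pj2 are jointly monic. *)
Lemma Spj_jointly_monic A B C (a b : Mor X C (Sob (cprod A B))) :
  cmp X (Smap (pj1 X A B)) a = cmp X (Smap (pj1 X A B)) b ->
  cmp X (Smap (pj2 X A B)) a = cmp X (Smap (pj2 X A B)) b -> a = b.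
Proof.
move=> e1 e2; have [w [_ [wo _]]] := se_omega_iso SE A B.
rewrite -(cmp1l CX a) -(cmp1l CX b) -wo -!(cmpA CX) /omega.
by rewrite !(pair_cmp CX) e1 e2.
Qed.

(* The same for S(S pj1) and S(S pj2), as S preserves the inverse of omega. *)
Lemma SSpj_jointly_monic A B C (a b : Mor X C (Sob (Sob (cprod A B)))) :
  cmp X (Smap (Smap (pj1 X A B))) a = cmp X (Smap (Smap (pj1 X A B))) b ->
  cmp X (Smap (Smap (pj2 X A B))) a = cmp X (Smap (Smap (pj2 X A B))) b ->
  a = b.
Proof.
move=> e1 e2; have [w [_ [wo _]]] := se_omega_iso SE A B.
have Swo : cmp X (Smap w) (Smap (omega Smap A B)) = idc X _.
  by rewrite -Smap_cmp wo Smap_id.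
rewrite -(cmp1l CX a) -(cmp1l CX b) -Swo -!(cmpA CX); congr (cmp X _ _).
by apply: Spj_jointly_monic; rewrite !(cmpA CX) -!Smap_cmp /omega
  ?(pj1_pair CX) ?(pj2_pair CX).
Qed.

Lemma Spj1_omega_inv A B (w : Mor X (cprod (Sob A) (Sob B)) (Sob (cprod A B))) :
  is_inverse (omega Smap A B) w -> cmp X (Smap (pj1 X A B)) w = pj1 X _ _.
Proof.
case=> _ ow; rewrite -(pj1_pair CX (Smap (pj1 X A B)) (Smap (pj2 X A B))).
by rewrite -(cmpA CX) -/(omega Smap A B) ow (cmp1r CX).
Qed.

Lemma Spj2_omega_inv A B (w : Mor X (cprod (Sob A) (Sob B)) (Sob (cprod A B))) :
  is_inverse (omega Smap A B) w -> cmp X (Smap (pj2 X A B)) w = pj2 X _ _.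
Proof.
case=> _ ow; rewrite -(pj2_pair CX (Smap (pj1 X A B)) (Smap (pj2 X A B))).
by rewrite -(cmpA CX) -/(omega Smap A B) ow (cmp1r CX).
Qed.

Lemma strong_CD_endo_restrict (P : homP X) :
  (forall A B (f : Mor X A B), P _ _ (Smap f)) ->
  (forall u, is_inverse (bang X (Sob cterm)) u -> P _ _ u) ->
  (forall A B w, is_inverse (omega Smap A B) w -> P _ _ w) ->
  is_strong_CD_endo Smap P.
Proof.
move=> PS Pu Pw; constructor=> //.
- exact: Smap_id.
- by move=> *; apply: Smap_cmp.
- by have [u [_ iu]] := se_term_iso SE; exists u; split=> //; apply: Pu.
- move=> A B; have [w [_ iw]] := se_omega_iso SE A B.
  by exists w; split=> //; apply: Pw.
- by move=> *; apply: (se_lin SE _ _ I I).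
- by move=> A B f _ w _; apply: (se_D SE I I).
Qed.

End StrongEndofunctor.

Section AbstractKleisli.
Variables (k : pzSemiRingType) (O : CartObs) (X : RawCDC k O) (Sob : O -> O)
  (Smap : forall A B, Mor X A B -> Mor X (Sob A) (Sob B))
  (eps : forall A, Mor X (Sob A) A) (theta : forall A, Mor X A (Sob A)).
Hypothesis AKX : is_CD_abstract_kleisli Smap eps theta.
Let CX := cak_CDC AKX.
Let AK := cak_AK AKX.
Let SE := cak_strong AKX.
Local Notation Pnat := (thetanat Smap theta).

(* The left unit law of the monad (S, S eps, theta). *)
Lemma delta_theta A : cmp X (Smap (eps A)) (theta (Sob A)) = idc X (Sob A).
Proof.
rewrite -[LHS](cmp1l CX) -(ak_eq2 AK A) -(cmpA CX).
rewrite [cmp X (Smap _) (cmp X _ _)](cmpA CX) -(ak_comp AK) -(ak_eps_nat AK).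
by rewrite (ak_eq2 AK) (ak_id AK) (cmp1l CX) (ak_eq1 AK).
Qed.

(* theta on a product is determined by theta on the factors, since the
   projections are theta-natural. *)
Lemma theta_prod A B (w : Mor X (cprod (Sob A) (Sob B)) (Sob (cprod A B))) :
  is_inverse (omega Smap A B) w ->
  theta (cprod A B) = cmp X w (pairing X (cmp X (theta A) (pj1 X A B))
                                          (cmp X (theta B) (pj2 X A B))).
Proof.
case=> wo _; rewrite (cak_p1 AKX) (cak_p2 AKX) -(pair_cmp CX) (cmpA CX).
by rewrite wo (cmp1l CX).
Qed.

(* D commutes with f |-> S f o theta, using that theta is D-linear and S is a
   differential functor. *)
Lemma D_Smap_theta A B (f : Mor X A B) :
  D X (cmp X (Smap f) (theta A)) = cmp X (Smap (D X f)) (theta (cprod A A)).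
Proof.
have [w [_ iw]] := se_omega_iso SE A A.
rewrite (CD5 CX I I) (cak_theta AKX) (se_D SE I I iw) -(cmpA CX).
by rewrite (theta_prod iw).
Qed.

Lemma thetanat_pair C A B (f : Mor X C A) (g : Mor X C B) :
  Pnat _ _ f -> Pnat _ _ g -> Pnat _ _ (pairing X f g).
Proof.
move=> Pf Pg; apply: (Spj_jointly_monic CX SE).
- by rewrite !(cmpA CX) -(cak_p1 AKX) -(Smap_cmp SE) -(cmpA CX) !(pj1_pair CX).
- by rewrite !(cmpA CX) -(cak_p2 AKX) -(Smap_cmp SE) -(cmpA CX) !(pj2_pair CX).
Qed.

Lemma thetanat_lin A B (r s : k) (f g : Mor X A B) :
  Pnat _ _ f -> Pnat _ _ g -> Pnat _ _ (r *: f + s *: g).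
Proof.
move=> Pf Pg; rewrite /thetanat (D_linear_lin CX (cak_theta AKX _)) Pf Pg.
by rewrite -(cmp_linl CX) (se_lin SE r s I I).
Qed.

Lemma thetanat_D A B (f : Mor X A B) : Pnat _ _ f -> Pnat _ _ (D X f).
Proof.
by move=> Pf; rewrite /thetanat -(D_linear_cmpD CX _ (cak_theta AKX _)) Pf
  D_Smap_theta.
Qed.

Lemma thetanat_CDC : is_CDC_on Pnat.
Proof.
apply: (CDC_on_sub CX).
- by move=> A; rewrite /thetanat (ak_id AK) (cmp1l CX) (cmp1r CX).
- move=> A B C g f Pf Pg.
  by rewrite /thetanat (cmpA CX) Pg -(cmpA CX) Pf (cmpA CX) -(ak_comp AK).
- exact: (cak_p1 AKX).
- exact: (cak_p2 AKX).
- exact: thetanat_pair.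
- by move=> A; apply: (S_terminal CX SE).
- move=> A B; rewrite /thetanat (Smap0 SE) (cmp0l CX).
  exact: (D_linear_cmp0 CX (cak_theta AKX _)).
- exact: thetanat_lin.
- exact: thetanat_D.
Qed.

Lemma thetanat_monad : is_monad_on Smap Pnat (fun A => Smap (eps A)) theta.
Proof.
constructor=> //.
- by move=> A B f _; apply: (ak_thetaS_nat AK).
- exact: (ak_id AK).
- by move=> *; apply: (ak_comp AK).
- by move=> A; apply: (ak_thetaS_nat AK).
- exact: (ak_eq3 AK).
- by move=> A B f _; rewrite -!(ak_comp AK) (ak_eps_nat AK).
- by move=> A; rewrite -!(ak_comp AK) (ak_eps_nat AK).
- exact: delta_theta.
- by move=> A; rewrite -(ak_comp AK) (ak_eq1 AK) (ak_id AK).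
Qed.

Lemma thetanat_CD_monad :
  is_CD_monad_on Smap Pnat (fun A => Smap (eps A)) theta.
Proof.
split; [exact: thetanat_monad | split; [|split]].
- apply: (strong_CD_endo_restrict SE).
  + by move=> A B f; apply: (ak_thetaS_nat AK).
  + by move=> u _; apply: (SS_terminal CX SE).
  + move=> A B w iw; apply: (SSpj_jointly_monic CX SE).
    * rewrite !(cmpA CX) -(ak_thetaS_nat AK) -(cmpA CX) (Spj1_omega_inv CX iw).
      by rewrite -(ak_comp AK) (Spj1_omega_inv CX iw) (cak_p1 AKX).
    * rewrite !(cmpA CX) -(ak_thetaS_nat AK) -(cmpA CX) (Spj2_omega_inv CX iw).
      by rewrite -(ak_comp AK) (Spj2_omega_inv CX iw) (cak_p2 AKX).
- move=> A; have [w [_ iw]] := se_omega_iso SE (Sob A) (Sob A).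
  rewrite /D_linear (se_D SE I I iw) (cak_eps AKX) (ak_comp AK) -(cmpA CX).
  by rewrite (Spj2_omega_inv CX iw).
- exact: (cak_theta AKX).
Qed.

Section KleisliCategory.
Variables (winv : forall A B, Mor X (cprod (Sob A) (Sob B)) (Sob (cprod A B)))
          (u : Mor X cterm (Sob cterm)).
Hypothesis iw : forall A B, is_inverse (omega Smap A B) (winv A B).
Local Notation KLS := (KL Smap (fun A => Smap (eps A)) theta winv u).
Local Notation PKL := (fun A B (g : Mor KLS A B) => Pnat A (Sob B) g).

Definition kl A B (f : Mor X A B) : Mor KLS A B := cmp X (Smap f) (theta A).

Lemma kl_thetanat A B (f : Mor X A B) : PKL _ _ (kl f).
Proof.
rewrite /thetanat /kl (cmpA CX) (ak_thetaS_nat AK) -(cmpA CX) (ak_eq3 AK).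
by rewrite (cmpA CX) -(ak_comp AK).
Qed.

Lemma eps_kl A B (f : Mor X A B) : cmp X (eps B) (kl f) = f.
Proof.
by rewrite /kl (cmpA CX) (ak_eps_nat AK) -(cmpA CX) (ak_eq1 AK) (cmp1r CX).
Qed.

Lemma kl_eps A B (g : Mor KLS A B) : PKL _ _ g -> kl (cmp X (eps B) g) = g.
Proof.
move=> Pg; rewrite /kl (ak_comp AK) -(cmpA CX) -Pg (cmpA CX).
by rewrite delta_theta (cmp1l CX).
Qed.

Lemma kl_id A : kl (idc X A) = idc KLS A.
Proof. by rewrite /kl (ak_id AK) (cmp1l CX). Qed.

Lemma kl_cmp A B C (f : Mor X A B) (g : Mor X B C) :
  kl (cmp X g f) = cmp KLS (kl g) (kl f).
Proof.
rewrite /= /kl !(cmpA CX) -!(ak_comp AK); congr (cmp X (Smap _) _).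
rewrite !(cmpA CX) (ak_eps_nat AK) -[cmp X (cmp X g _) _](cmpA CX).
by rewrite (ak_eq1 AK) (cmp1r CX).
Qed.

Lemma kl_pj1 A B : kl (pj1 X A B) = pj1 KLS A B.
Proof. exact/esym/(cak_p1 AKX). Qed.

Lemma kl_pj2 A B : kl (pj2 X A B) = pj2 KLS A B.
Proof. exact/esym/(cak_p2 AKX). Qed.

Lemma kl_pair C A B (f : Mor X C A) (g : Mor X C B) :
  kl (pairing X f g) = pairing KLS (kl f) (kl g).
Proof.
have Spair :
    pairing X (Smap f) (Smap g) = cmp X (omega Smap A B) (Smap (pairing X f g)).
  by rewrite /omega (pair_cmp CX) -!(ak_comp AK) (pj1_pair CX) (pj2_pair CX).
by rewrite /= /kl -(pair_cmp CX) Spair !(cmpA CX) (proj1 (iw A B)) (cmp1l CX).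
Qed.

Lemma kl_bang A : kl (bang X A) = bang KLS A.
Proof. exact: (S_terminal CX SE). Qed.

Lemma kl_lin A B (f g : Mor X A B) (r s : k) :
  kl (r *: f + s *: g) = r *: kl f + s *: kl g.
Proof. by rewrite /kl -(cmp_linl CX) (se_lin SE r s I I). Qed.

Lemma kl_D A B (f : Mor X A B) : kl (D X f) = D KLS (kl f).
Proof. exact/esym/D_Smap_theta. Qed.

Lemma kleisli_onto A B (g : Mor KLS A B) : PKL _ _ g -> exists f, g = kl f.
Proof. by move=> Pg; exists (cmp X (eps B) g); rewrite kl_eps. Qed.

Lemma kleisli_CDC : is_CDC_on PKL.
Proof.
exact: (CDC_on_image CX kl_thetanat kleisli_onto kl_id kl_cmp kl_pj1 kl_pj2
  kl_pair kl_bang kl_lin kl_D).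
Qed.

Lemma kl_strict : is_strict_CD_functor (allMaps X) PKL kl.
Proof.
exact: (strict_CD_functor_image CX kl_thetanat kl_id kl_cmp kl_pair kl_bang
  kl_lin kl_D).
Qed.

Lemma kl_inverse_strict :
  is_strict_CD_functor PKL (allMaps X)
    (fun A B (g : Mor KLS A B) => cmp X (eps B) g).
Proof.
exact: (strict_CD_functor_inverse CX kleisli_onto kl_id kl_cmp kl_pj1 kl_pj2
  kl_lin kl_D eps_kl).
Qed.

End KleisliCategory.
End AbstractKleisli.

Unset Implicit Arguments.

Theorem mainTheorem6 (k : comPzSemiRingType) (O : CartObs) (X : RawCDC k O)
    (Sob : O -> O) (Smap : forall A B, Mor X A B -> Mor X (Sob A) (Sob B))
    (eps : forall A, Mor X (Sob A) A) (theta : forall A, Mor X A (Sob A)) :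
  is_CD_abstract_kleisli Smap eps theta ->
  let Pnat := thetanat Smap theta in
  let delta := fun A => Smap _ _ (eps A) in
  (* theta-nat[X] is a Cartesian k-differential category (inherited structure) *)
  is_CDC_on Pnat /\
  (* (S, delta, theta) is a Cartesian k-differential monad on theta-nat[X] *)
  is_CD_monad_on Smap Pnat delta theta /\
  (forall (winv : forall A B, Mor X (cprod (Sob A) (Sob B)) (Sob (cprod A B)))
          (u : Mor X cterm (Sob cterm)),
    (forall A B, is_inverse (omega Smap A B) (winv A B)) ->
    is_inverse (bang X (Sob cterm)) u ->
    let KLS := KL Smap delta theta winv u in
    (* Kleisli maps are the theta-natural maps A -> S B *)
    let PKL : homP KLS := fun A B (g : Mor X A (Sob B)) => Pnat A (Sob B) g in
    let G := fun A B (f : Mor X A B) => cmp X (Smap _ _ f) (theta A) in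
    let Ginv := fun A B (g : Mor X A (Sob B)) => cmp X (eps B) g in
    is_CDC_on PKL /\
    is_strict_CD_functor (allMaps X) PKL G /\
    is_strict_CD_functor PKL (allMaps X) Ginv /\
    (forall A B (f : Mor X A B), Ginv A B (G A B f) = f) /\
    (forall A B (g : Mor X A (Sob B)), PKL A B g -> G A B (Ginv A B g) = g)).
Proof.
move=> AKX Pnat delta.
split; first exact: (thetanat_CDC AKX).
split; first exact: (thetanat_CD_monad AKX).
move=> winv u iw _ KLS PKL G Ginv.
split; first exact: (kleisli_CDC AKX u iw).
split; first exact: (kl_strict AKX u iw).
split; first exact: (kl_inverse_strict AKX winv u).
split; first exact: (eps_kl AKX).
exact: (kl_eps AKX).
Qed.
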